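(* Let $k$ be a field, $A_0\subseteq\mathrm{M}_n(k)$ a $d$-dimensional $k$-subalgebra, and $R=k[\epsilon]/(\epsilon^2)$. Let $\mathrm{Def}_{A_0}(R)$ be the set of $R$-subalgebras $A\subseteq\mathrm{M}_n(R)$ such that $A$ and $\mathrm{M}_n(R)/A$ are free $R$-modules, $\mathrm{rank}_R A=d$, and the image of $A$ under reduction $\mathrm{M}_n(R)\to\mathrm{M}_n(k)$ modulo $\epsilon$ is $A_0$ (i.e. $A\otimes_R k=A_0$ inside $\mathrm{M}_n(k)$). Let $G(R)=\{P\in\mathrm{PGL}_n(R)\mid P\equiv [I_n]\bmod \epsilon\}$, acting on $\mathrm{Def}_{A_0}(R)$ by $(A,P)\mapsto P^{-1}AP$. Then there is a bijection $H^1(A_0,\mathrm{M}_n(k)/A_0)\cong \mathrm{Def}_{A_0}(R)/G(R)$.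
   Context: $H^1$ is Hochschild cohomology, with $\mathrm{M}_n(k)/A_0$ an $A_0$-bimodule via matrix multiplication. $\mathrm{PGL}_n(R)=\mathrm{GL}_n(R)/(R^\times I_n)$ for the local ring $R$, and $[I_n]$ is the class of the identity. *)

From HB Require Import structures.
From mathcomp Require Import all_boot all_order all_algebra.
From mathcomp Require Import ring.
Set Implicit Arguments. Unset Strict Implicit. Unset Printing Implicit Defensive.
Import Order.TTheory GRing.Theory Num.Theory.
Local Open Scope ring_scope.

(* The ring of dual numbers  R = k[eps]/(eps^2),  a + b eps  ~  (a, b) *)
Definition dual (k : Type) : Type := (k * k)%type.

Section Dual.
Variable k : fieldType.

HB.instance Definition _ := GRing.Zmodule.copy (dual k) (k * k)%type.

Definition dual_one : dual k := (1, 0).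
Definition dual_mul (x y : dual k) : dual k :=
  (x.1 * y.1, x.1 * y.2 + x.2 * y.1).

Lemma dual_mulA : associative dual_mul.
Proof. by move=> [a b] [c d] [e f]; rewrite /dual_mul /=; congr pair; ring. Qed.
Lemma dual_mulC : commutative dual_mul.
Proof. by move=> [a b] [c d]; rewrite /dual_mul /=; congr pair; ring. Qed.
Lemma dual_mul1 : left_id dual_one dual_mul.
Proof. by move=> [a b]; rewrite /dual_mul /=; congr pair; ring. Qed.
Lemma dual_mulDl : left_distributive dual_mul +%R.
Proof.
move=> [a b] [c d] [e f].
have -> : ((a, b) + (c, d) : dual k) = (a + c, b + d) by [].
rewrite /dual_mul /=.
have -> : forall x y z w : k, ((x, y) + (z, w) : dual k) = (x + z, y + w) by [].
by congr pair; ring.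
Qed.
Lemma dual_one_neq0 : dual_one != 0.
Proof. by apply/negP => /eqP [] /eqP; rewrite oner_eq0. Qed.

HB.instance Definition _ := GRing.Zmodule_isComNzRing.Build (dual k)
  dual_mulA dual_mulC dual_mul1 dual_mulDl dual_one_neq0.

Definition eps : dual k := (0, 1).
End Dual.

Section Defs.
Variables (k : fieldType) (n : nat).

Definition red (X : 'M[dual k]_n) : 'M[k]_n := map_mx (fun x : dual k => x.1) X.

Definition is_k_subalgebra (A0 : {vspace 'M[k]_n}) : Prop :=
  (1%:M \in A0) /\ (forall a b, a \in A0 -> b \in A0 -> a *m b \in A0).

(* A k-linear map A0 -> M_n(k)/A0 is represented by a lift
   f : M_n(k) -> M_n(k), which is k-linear on A0 modulo A0.          *)
Definition cochain1 (A0 : {vspace 'M[k]_n}) (f : 'M[k]_n -> 'M[k]_n) : Prop :=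
  forall (c : k) a b, a \in A0 -> b \in A0 ->
    f (c *: a + b) - (c *: f a + f b) \in A0.

Definition cocycle1 (A0 : {vspace 'M[k]_n}) (f : 'M[k]_n -> 'M[k]_n) : Prop :=
  cochain1 A0 f /\
  forall a b, a \in A0 -> b \in A0 -> a *m f b - f (a *m b) + f a *m b \in A0.

Definition cohomologous (A0 : {vspace 'M[k]_n}) (f g : 'M[k]_n -> 'M[k]_n) : Prop :=
  exists m : 'M[k]_n, forall a, a \in A0 -> f a - g a - (a *m m - m *m a) \in A0.

Definition is_R_subalgebra (A : 'M[dual k]_n -> Prop) : Prop :=
  [/\ A 0, A 1%:M,
      (forall X Y, A X -> A Y -> A (X + Y)),
      (forall (r : dual k) X, A X -> A (r *: X)) &
      (forall X Y, A X -> A Y -> A (X *m Y))].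

Definition free_of_rank (A : 'M[dual k]_n -> Prop) (d : nat) : Prop :=
  exists b : 'I_d -> 'M[dual k]_n,
    [/\ forall i, A (b i),
        forall X, A X -> exists r : 'I_d -> dual k, X = \sum_(i < d) r i *: b i &
        forall r : 'I_d -> dual k, \sum_(i < d) r i *: b i = 0 -> forall i, r i = 0].

(* M_n(R)/A is a free R-module: the classes of some c_1..c_m form a basis *)
Definition free_quotient (A : 'M[dual k]_n -> Prop) : Prop :=
  exists (m : nat) (c : 'I_m -> 'M[dual k]_n),
    (forall X, exists r : 'I_m -> dual k, A (X - \sum_(i < m) r i *: c i)) /\
    (forall r : 'I_m -> dual k, A (\sum_(i < m) r i *: c i) -> forall i, r i = 0).

Definition DefA0 (A0 : {vspace 'M[k]_n}) (d : nat) (A : 'M[dual k]_n -> Prop) : Prop :=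
  [/\ is_R_subalgebra A, free_of_rank A d, free_quotient A &
      forall Y, Y \in A0 <-> exists X, A X /\ red X = Y].

(* P (a representative in GL_n(R), with inverse Q) defines an element of
   G(R) = { [P] in PGL_n(R) | [P] = [I_n] mod eps }, i.e. P mod eps is a
   nonzero scalar matrix. *)
Definition inG (P Q : 'M[dual k]_n) : Prop :=
  [/\ P *m Q = 1%:M, Q *m P = 1%:M & exists c : k, c != 0 /\ red P = c%:M].

Definition G_conj (A B : 'M[dual k]_n -> Prop) : Prop :=
  exists P Q, inG P Q /\ forall Y, B Y <-> exists X, A X /\ Y = Q *m X *m P.

End Defs.

(* The quotient set  {x | P x} / r,  as the set of its classes. *)
Definition quot_set (T : Type) (P : T -> Prop) (r : T -> T -> Prop) : Type :=
  {S : T -> Prop | exists x, P x /\ S = (fun y => P y /\ r x y)}.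

Definition H1 (k : fieldType) (n : nat) (A0 : {vspace 'M[k]_n}) : Type :=
  quot_set (cocycle1 A0) (cohomologous A0).

Definition DefA0_mod_G (k : fieldType) (n : nat) (A0 : {vspace 'M[k]_n}) (d : nat) : Type :=
  quot_set (@DefA0 k n A0 d) (@G_conj k n).

From HB Require Import structures.
From mathcomp Require Import all_boot all_order all_algebra.
From mathcomp Require Import ring.
From Stdlib Require Import ClassicalEpsilon FunctionalExtensionality.
From Stdlib Require Import PropExtensionality ProofIrrelevance.

(* A matrix over R = k[eps]/(eps^2) is written X = red X + eps * eps_part X.
   To a 1-cocycle f of A0 with values in M_n(k)/A0 (represented by a lift
   f : M_n(k) -> M_n(k)) we attach
        def_alg f = { a + eps b | a in A0, b - f a in A0 }.
   It lies in Def_{A0}(R): it is closed under products because the eps-part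
   of a product obeys the Leibniz rule, and it and M_n(R)/def_alg f are free,
   with bases lifted from a basis of A0 and of a complement of A0.
   Conversely every A in Def_{A0}(R) equals def_alg f for the cocycle
   f a = eps_part (lift of a to A); the freeness of M_n(R)/A is what forces
   eps * b to lie in A exactly when b lies in A0.  Finally an element of G(R)
   is c (1 + eps m) up to its inverse, and conjugating def_alg f by 1 + eps m
   gives def_alg (f + [_, m]); hence G(R)-orbits are cohomology classes. *)

Set Implicit Arguments. Unset Strict Implicit. Unset Printing Implicit Defensive.
Import GRing.Theory.
Local Open Scope ring_scope.

(* Normalises identities between matrix expressions by distributing products
   and then comparing entries with [ring]; products appear as opaque sums. *)
Ltac mx_ring :=
  rewrite ?mulmxDr ?mulmxDl ?mulmxN ?mulNmx ?mulmxBr ?mulmxBl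
          -?scalemxAl -?scalemxAr ?mulmx0 ?mul0mx ?mulmx1 ?mul1mx;
  let i := fresh "i" in let j := fresh "j" in
  apply/matrixP => i j; rewrite !mxE; ring.

Section DualMatrix.
Variables (k : fieldType) (n : nat).
Local Notation M := 'M[k]_n.
Local Notation MR := 'M[dual k]_n.

Definition eps_part (X : MR) : M := map_mx (fun x : dual k => x.2) X.

Definition dual_mx (a b : M) : MR := \matrix_(i, j) ((a i j, b i j) : dual k).

Lemma red_dual_mx (a b : M) : red (dual_mx a b) = a.
Proof. by apply/matrixP => i j; rewrite !mxE. Qed.

Lemma eps_part_dual_mx (a b : M) : eps_part (dual_mx a b) = b.
Proof. by apply/matrixP => i j; rewrite !mxE. Qed.

Lemma dual_mx_eq (X Y : MR) : red X = red Y -> eps_part X = eps_part Y -> X = Y.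
Proof.
move=> /matrixP eq_red /matrixP eq_eps; apply/matrixP => i j.
move: (eq_red i j) (eq_eps i j); rewrite !mxE.
by case: (X i j) (Y i j) => [? ?] [? ?] /= -> ->.
Qed.

Lemma red0 : red (0 : MR) = 0.
Proof. by apply/matrixP => i j; rewrite !mxE. Qed.

Lemma eps_part0 : eps_part 0 = 0.
Proof. by apply/matrixP => i j; rewrite !mxE. Qed.

Lemma redD (X Y : MR) : red (X + Y) = red X + red Y.
Proof. by apply/matrixP => i j; rewrite !mxE. Qed.

Lemma eps_partD (X Y : MR) : eps_part (X + Y) = eps_part X + eps_part Y.
Proof. by apply/matrixP => i j; rewrite !mxE. Qed.

Lemma redB (X Y : MR) : red (X - Y) = red X - red Y.
Proof. by apply/matrixP => i j; rewrite !mxE. Qed.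

Lemma eps_partB (X Y : MR) : eps_part (X - Y) = eps_part X - eps_part Y.
Proof. by apply/matrixP => i j; rewrite !mxE. Qed.

Lemma red_sum (I : Type) (r : seq I) (F : I -> MR) :
  red (\sum_(i <- r) F i) = \sum_(i <- r) red (F i).
Proof. by elim/big_rec2: _ => [|i y1 y2 _ <-]; rewrite ?red0 ?redD. Qed.

Lemma eps_part_sum (I : Type) (r : seq I) (F : I -> MR) :
  eps_part (\sum_(i <- r) F i) = \sum_(i <- r) eps_part (F i).
Proof. by elim/big_rec2: _ => [|i y1 y2 _ <-]; rewrite ?eps_part0 ?eps_partD. Qed.

Lemma red_scale (r : dual k) (X : MR) : red (r *: X) = r.1 *: red X.
Proof. by apply/matrixP => i j; rewrite !mxE. Qed.

Lemma eps_part_scale (r : dual k) (X : MR) :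
  eps_part (r *: X) = r.1 *: eps_part X + r.2 *: red X.
Proof. by apply/matrixP => i j; rewrite !mxE. Qed.

Lemma red1 : red (1%:M : MR) = 1%:M.
Proof. by apply/matrixP => i j; rewrite !mxE; case: (i == j). Qed.

Lemma eps_part1 : eps_part (1%:M : MR) = 0.
Proof. by apply/matrixP => i j; rewrite !mxE; case: (i == j). Qed.

Lemma dual_fst_sum (I : Type) (r : seq I) (F : I -> dual k) :
  (\sum_(i <- r) F i).1 = \sum_(i <- r) (F i).1.
Proof. by elim/big_rec2: _ => // i y1 y2 _ <-. Qed.

Lemma dual_snd_sum (I : Type) (r : seq I) (F : I -> dual k) :
  (\sum_(i <- r) F i).2 = \sum_(i <- r) (F i).2.
Proof. by elim/big_rec2: _ => // i y1 y2 _ <-. Qed.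

Lemma red_mul (X Y : MR) : red (X *m Y) = red X *m red Y.
Proof.
by apply/matrixP => i j; rewrite !mxE dual_fst_sum; apply: eq_bigr => l _; rewrite !mxE.
Qed.

Lemma eps_part_mul (X Y : MR) :
  eps_part (X *m Y) = red X *m eps_part Y + eps_part X *m red Y.
Proof.
apply/matrixP => i j; rewrite !mxE dual_snd_sum -big_split /=.
by apply: eq_bigr => l _; rewrite !mxE.
Qed.

End DualMatrix.

Section QuotientSet.

Definition equiv_on (T : Type) (P : T -> Prop) (r : T -> T -> Prop) : Prop :=
  [/\ forall x, P x -> r x x,
      forall x y, P x -> P y -> r x y -> r y x &
      forall x y z, P x -> P y -> P z -> r x y -> r y z -> r x z].

Definition eq_class (T : Type) (P : T -> Prop) (r : T -> T -> Prop) (x : T) :=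
  fun y => P y /\ r x y.

Variables (T : Type) (P : T -> Prop) (r : T -> T -> Prop) (r_equiv : equiv_on P r).

Lemma eq_class_eq x y : P x -> P y -> r x y -> eq_class P r x = eq_class P r y.
Proof.
case: r_equiv => _ r_sym r_trans Px Py rxy.
apply: functional_extensionality => z; apply: propositional_extensionality.
split=> -[Pz rz]; split=> //; first exact: (r_trans y x z) (r_sym _ _ _ _ rxy) rz.
exact: (r_trans x y z) rxy rz.
Qed.

Lemma eq_class_rel x y : P y -> eq_class P r x = eq_class P r y -> r x y.
Proof.
case: r_equiv => r_refl _ _ Py /(congr1 (fun S => S y)) eq_xy.
by have [] : eq_class P r x y by rewrite eq_xy; split=> //; apply: r_refl.
Qed.

Lemma quot_set_eq (S S' : quot_set P r) : proj1_sig S = proj1_sig S' -> S = S'.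
Proof. by case: S S' => [X HX] [Y HY] /= XY; apply: subset_eq_compat. Qed.

End QuotientSet.

Lemma quot_set_bij (T1 T2 : Type) (P1 : T1 -> Prop) (r1 : T1 -> T1 -> Prop)
    (P2 : T2 -> Prop) (r2 : T2 -> T2 -> Prop) (phi : T1 -> T2) :
  equiv_on P1 r1 -> equiv_on P2 r2 ->
  (forall x, P1 x -> P2 (phi x)) ->
  (forall x y, P1 x -> P1 y -> (r1 x y <-> r2 (phi x) (phi y))) ->
  (forall y, P2 y -> exists x, P1 x /\ r2 (phi x) y) ->
  exists f : quot_set P1 r1 -> quot_set P2 r2, bijective f.
Proof.
move=> equiv1 equiv2 phiP phi_rel phi_surj.
pose rep (S : quot_set P1 r1) : T1 :=
  proj1_sig (constructive_indefinite_description _ (proj2_sig S)).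
have repP S : P1 (rep S) /\ proj1_sig S = eq_class P1 r1 (rep S).
  by rewrite /rep; case: constructive_indefinite_description.
pose F (S : quot_set P1 r1) : quot_set P2 r2 :=
  exist _ (eq_class P2 r2 (phi (rep S))) (ex_intro _ _ (conj (phiP _ (repP S).1) erefl)).
pose cls1 x (Px : P1 x) : quot_set P1 r1 := exist _ _ (ex_intro _ x (conj Px erefl)).
have rep_cls x (Px : P1 x) : r1 x (rep (cls1 x Px)).
  by have [Prep E] := repP (cls1 x Px); apply: (eq_class_rel equiv1) E.
have F_inj : injective F.
  move=> S S' /(congr1 (@proj1_sig _ _)) /= E.
  have [[Prep E1] [Prep' E2]] := (repP S, repP S').
  have rel2 : r2 (phi (rep S)) (phi (rep S')).
    exact: (eq_class_rel equiv2) (phiP _ Prep') E.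
  apply: quot_set_eq; rewrite E1 E2; apply: (eq_class_eq equiv1) => //.
  exact/phi_rel.
have F_surj T : exists S, F S = T.
  have [y [Py T_y]] := proj2_sig T; have [x [Px rxy]] := phi_surj _ Py.
  have Prep := (repP (cls1 x Px)).1.
  exists (cls1 x Px); apply: quot_set_eq; rewrite T_y; apply: (eq_class_eq equiv2) => //.
    exact: (phiP _ Prep).
  have [_ r2_sym r2_trans] := equiv2.
  have [Px' Prep'] := (phiP _ Px, phiP _ Prep).
  apply: (r2_trans _ (phi x)) => //; apply: r2_sym => //.
  by apply/phi_rel => //; apply: rep_cls.
exists F, (fun T => proj1_sig (constructive_indefinite_description _ (F_surj T))).
  by move=> S; apply: F_inj; case: constructive_indefinite_description.
by move=> T; case: constructive_indefinite_description.
Qed.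

Section VectorSpaceFacts.
Variables (K : fieldType) (vT : vectType K) (U : {vspace vT}).

Lemma eq_memv (x y : vT) : x = y -> y \in U -> x \in U.
Proof. by move=> ->. Qed.

Lemma memv_vbasis_nth (i : 'I_(\dim U)) : (vbasis U)`_i \in U.
Proof. by apply: vbasis_mem; apply: mem_nth; rewrite size_tuple. Qed.

Lemma vbasis_nth_free (al : 'I_(\dim U) -> K) :
  \sum_i al i *: (vbasis U)`_i = 0 -> forall i, al i = 0.
Proof. by move: al; apply/freeP; apply: basis_free (vbasisP U). Qed.

Lemma memv_compl0 (x : vT) : x \in U -> x \in (U^C)%VS -> x = 0.
Proof.
move=> xU xUC; have : x \in (U :&: U^C)%VS by rewrite memv_cap xU xUC.
by rewrite capv_compl memv0 => /eqP.
Qed.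

Lemma decomp_compl (x : vT) : exists u (al : 'I_(\dim (U^C)%VS) -> K),
  u \in U /\ x = u + \sum_i al i *: (vbasis (U^C)%VS)`_i.
Proof.
have : x \in (U + U^C)%VS by rewrite addv_complf memvf.
case/memv_addP => u uU [v vUC ->]; exists u, (fun i => coord (vbasis (U^C)%VS) i v).
by split=> //; rewrite {1}(coord_vbasis vUC).
Qed.

End VectorSpaceFacts.

Section Cochains.
Variables (k : fieldType) (n : nat) (A0 : {vspace 'M[k]_n}).
Local Notation M := 'M[k]_n.

Section Cochain.
Variables (f : M -> M) (f_cochain : cochain1 A0 f).

Lemma cochain0 : f 0 \in A0.
Proof.
have := f_cochain 1 (mem0v _) (mem0v _); rewrite -memvN.
by apply: eq_memv; rewrite scaler0 addr0 scale1r; mx_ring.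
Qed.

Lemma cochain_add a b : a \in A0 -> b \in A0 -> f (a + b) - (f a + f b) \in A0.
Proof. by move=> aA bA; have := f_cochain 1 aA bA; rewrite !scale1r. Qed.

Lemma cochain_scale c a : a \in A0 -> f (c *: a) - c *: f a \in A0.
Proof.
move=> aA; have := memvD (f_cochain c aA (mem0v _)) cochain0.
by apply: eq_memv; rewrite addr0; mx_ring.
Qed.

Lemma cochain_sum m (al : 'I_m -> k) (v : 'I_m -> M) : (forall i, v i \in A0) ->
  f (\sum_i al i *: v i) - \sum_i al i *: f (v i) \in A0.
Proof.
move=> vA; suff [] : \sum_i al i *: v i \in A0 /\
                     f (\sum_i al i *: v i) - \sum_i al i *: f (v i) \in A0 by [].
elim/big_rec2: _ => [|i y1 y2 _ [y2A fy2]].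
  by rewrite subr0; split; [exact: mem0v | exact: cochain0].
split; first by rewrite memvD ?memvZ.
by have := memvD (f_cochain (al i) (vA i) y2A) fy2; apply: eq_memv; mx_ring.
Qed.

End Cochain.

(* A cocycle of a unital A0 kills the unit modulo A0 (take a = b = 1). *)
Lemma cocycle_one (f : M -> M) : 1%:M \in A0 -> cocycle1 A0 f -> f 1%:M \in A0.
Proof.
move=> oneA [_ f_der]; have := f_der _ _ oneA oneA.
by apply: eq_memv; rewrite !mul1mx !mulmx1; mx_ring.
Qed.

Lemma cohomologous_equiv : equiv_on (cocycle1 A0) (cohomologous A0).
Proof.
split.
- by move=> f _; exists 0 => a _; apply: eq_memv (mem0v _); mx_ring.
- move=> f g _ _ [m fg]; exists (- m) => a aA; rewrite -memvN.
  by apply: eq_memv (fg a aA); mx_ring.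
- move=> f g h _ _ _ [m1 fg] [m2 gh]; exists (m1 + m2) => a aA.
  by apply: eq_memv (memvD (fg a aA) (gh a aA)); mx_ring.
Qed.

End Cochains.

Section CocycleDeformation.
Variables (k : fieldType) (n : nat) (A0 : {vspace 'M[k]_n}).
Hypothesis A0_subalg : is_k_subalgebra A0.
Variables (f : 'M[k]_n -> 'M[k]_n) (f_cocycle : cocycle1 A0 f).
Local Notation M := 'M[k]_n.
Local Notation MR := 'M[dual k]_n.

Definition def_alg (X : MR) : Prop := red X \in A0 /\ eps_part X - f (red X) \in A0.

Lemma def_alg_dual_mx a : a \in A0 -> def_alg (dual_mx a (f a)).
Proof. by move=> aA; rewrite /def_alg red_dual_mx eps_part_dual_mx subrr mem0v. Qed.

(* Closure under products is the cocycle identity, via the Leibniz rule. *)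
Lemma def_alg_subalgebra : is_R_subalgebra def_alg.
Proof.
have [oneA mulA] := A0_subalg; have f_cochain := f_cocycle.1.
split.
- by rewrite /def_alg red0 eps_part0 sub0r memvN mem0v cochain0.
- by rewrite /def_alg red1 eps_part1 sub0r memvN oneA cocycle_one.
- move=> X Y [XA Xf] [YA Yf]; rewrite /def_alg redD eps_partD; split; first exact: memvD.
  have := memvB (memvD Xf Yf) (cochain_add f_cochain XA YA).
  by apply: eq_memv; mx_ring.
- move=> r X [XA Xf]; rewrite /def_alg red_scale eps_part_scale; split; first exact: memvZ.
  have := memvB (memvD (memvZ r.1 Xf) (memvZ r.2 XA)) (cochain_scale f_cochain r.1 XA).
  by apply: eq_memv; mx_ring.
- move=> X Y [XA Xf] [YA Yf]; rewrite /def_alg red_mul eps_part_mul; split; first exact: mulA.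
  have := memvD (memvD (mulA _ _ XA Yf) (mulA _ _ Xf YA)) (f_cocycle.2 _ _ XA YA).
  by apply: eq_memv; mx_ring.
Qed.

Lemma def_alg_red (Y : M) : Y \in A0 <-> exists X, def_alg X /\ red X = Y.
Proof.
split; last by case=> X [[XA _] <-].
by move=> YA; exists (dual_mx Y (f Y)); rewrite red_dual_mx; split=> //; apply: def_alg_dual_mx.
Qed.

(* Basis: the lifts v_i + eps f(v_i) of a basis (v_i) of A0. *)
Lemma def_alg_free : free_of_rank def_alg (\dim A0).
Proof.
pose v := vbasis A0; exists (fun i => dual_mx v`_i (f v`_i)); split.
- by move=> i; apply: def_alg_dual_mx; apply: memv_vbasis_nth.
- move=> X [XA Xf]; pose al i := coord v i (red X).
  pose w := eps_part X - \sum_i al i *: f v`_i.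
  have wA : w \in A0.
    have := memvD Xf (cochain_sum f_cocycle.1 al (@memv_vbasis_nth _ _ A0)).
    by rewrite -(coord_vbasis XA); apply: eq_memv; rewrite /w; mx_ring.
  exists (fun i => (al i, coord v i w)); apply: dual_mx_eq.
    rewrite red_sum {1}(coord_vbasis XA); apply: eq_bigr => i _.
    by rewrite red_scale red_dual_mx.
  rewrite eps_part_sum; under eq_bigr do rewrite eps_part_scale red_dual_mx eps_part_dual_mx.
  by rewrite big_split /= -(coord_vbasis wA) /w; mx_ring.
- move=> r /[dup] /(congr1 (@red _ _)) sum_red /(congr1 (@eps_part _ _)) sum_eps.
  have r1 : forall i, (r i).1 = 0.
    apply: vbasis_nth_free; rewrite -[RHS]red0 -sum_red red_sum.
    by apply: eq_bigr => j _; rewrite red_scale red_dual_mx.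
  have r2 : forall i, (r i).2 = 0.
    apply: vbasis_nth_free; rewrite -[RHS]eps_part0 -sum_eps eps_part_sum.
    apply: eq_bigr => j _.
    by rewrite eps_part_scale red_dual_mx eps_part_dual_mx r1 scale0r add0r.
  by move=> i; case: (r i) (r1 i) (r2 i) => ? ? /= -> ->.
Qed.

(* Basis of the quotient: the classes of the basis vectors w_i of A0^C. *)
Lemma def_alg_free_quotient : free_quotient def_alg.
Proof.
pose w := vbasis (A0^C)%VS.
have red_comb (r : 'I_(\dim (A0^C)%VS) -> dual k) :
    red (\sum_i r i *: dual_mx w`_i 0) = \sum_i (r i).1 *: w`_i.
  by rewrite red_sum; apply: eq_bigr => i _; rewrite red_scale red_dual_mx.
have eps_comb (r : 'I_(\dim (A0^C)%VS) -> dual k) :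
    eps_part (\sum_i r i *: dual_mx w`_i 0) = \sum_i (r i).2 *: w`_i.
  rewrite eps_part_sum; apply: eq_bigr => i _.
  by rewrite eps_part_scale red_dual_mx eps_part_dual_mx scaler0 add0r.
have complC (al : 'I_(\dim (A0^C)%VS) -> k) : \sum_i al i *: w`_i \in (A0^C)%VS.
  by apply: memv_suml => i _; rewrite memvZ ?memv_vbasis_nth.
exists (\dim (A0^C)%VS), (fun i => dual_mx w`_i 0); split.
- move=> X; have [a0 [al [a0A red_decomp]]] := decomp_compl A0 (red X).
  have [a1 [be [a1A eps_decomp]]] := decomp_compl A0 (eps_part X - f a0).
  exists (fun i => (al i, be i)).
  rewrite /def_alg redB eps_partB red_comb eps_comb /=.
  have -> : red X - \sum_i al i *: w`_i = a0 by rewrite red_decomp; mx_ring.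
  have -> : eps_part X - \sum_i be i *: w`_i - f a0 = a1.
    by rewrite addrAC eps_decomp addrK.
  by split.
- move=> r [redA epsA]; rewrite red_comb eps_comb in redA epsA.
  have r1 : forall i, (r i).1 = 0.
    by apply: vbasis_nth_free; apply: memv_compl0 redA (complC _).
  have red_sum0 : \sum_i (r i).1 *: w`_i = 0.
    by apply: big1 => i _; rewrite r1 scale0r.
  have r2 : forall i, (r i).2 = 0.
    apply: vbasis_nth_free; apply: memv_compl0 (complC _).
    have := memvD epsA (cochain0 f_cocycle.1); rewrite red_sum0.
    by apply: eq_memv; mx_ring.
  by move=> i; case: (r i) (r1 i) (r2 i) => ? ? /= -> ->.
Qed.

Lemma def_alg_in_Def : DefA0 A0 (\dim A0) def_alg.
Proof.
split; [exact: def_alg_subalgebra | exact: def_alg_free |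
        exact: def_alg_free_quotient | exact: def_alg_red].
Qed.

End CocycleDeformation.

Section DeformationCocycle.
Variables (k : fieldType) (n : nat) (A0 : {vspace 'M[k]_n}) (d : nat).
Variables (A : 'M[dual k]_n -> Prop) (A_def : DefA0 A0 d A).
Local Notation M := 'M[k]_n.
Local Notation MR := 'M[dual k]_n.

Lemma def_sub X Y : A X -> A Y -> A (X - Y).
Proof.
case: A_def => [[_ _ addA scaleA _] _ _ _] XA YA.
by rewrite -scaleN1r; apply: addA => //; apply: scaleA.
Qed.

Lemma def_red X : A X -> red X \in A0.
Proof. by case: A_def => _ _ _ redA XA; apply/redA; exists X. Qed.

(* The elements of A that vanish mod eps are exactly the eps b, b in A0.
   The forward direction uses that M_n(R)/A has no eps-torsion. *)
Lemma def_eps_mem (Z : MR) : red Z = 0 -> (A Z <-> eps_part Z \in A0).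
Proof.
case: (A_def) => [[_ _ _ scaleA _] _ [m [c [c_span c_free]]] redA] Z0.
have eps_lift (Y : MR) : red Y = eps_part Z -> eps k *: Y = Z.
  move=> YZ; apply: dual_mx_eq; first by rewrite red_scale Z0 scale0r.
  by rewrite eps_part_scale YZ /= scale0r scale1r add0r.
split=> [ZA|]; last first.
  by case/redA => X [XA XZ]; rewrite -(eps_lift X XZ); apply: scaleA.
have [r rA] := c_span (dual_mx (eps_part Z) 0).
have sumA : A (\sum_i (eps k * r i) *: c i).
  have := def_sub ZA (scaleA (eps k) _ rA).
  rewrite scalerBr eps_lift ?red_dual_mx // scaler_sumr opprB addrC subrK.
  by under eq_bigr do rewrite scalerA.
have r1 i : (r i).1 = 0.
  by have /(congr1 snd) /= := c_free _ sumA i; rewrite mul0r mul1r add0r.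
have := def_red rA; rewrite redB red_dual_mx red_sum.
by under eq_bigr do rewrite red_scale r1 scale0r; rewrite big1 // subr0.
Qed.

Definition def_lift (a : M) : MR := epsilon (inhabits 0) (fun X => A X /\ red X = a).

Lemma def_liftP a : a \in A0 -> A (def_lift a) /\ red (def_lift a) = a.
Proof.
move=> aA; apply: (epsilon_spec (inhabits (0 : MR)) (fun X => A X /\ red X = a)).
by case: A_def => _ _ _ redA; apply/redA.
Qed.

Definition def_cocycle (a : M) : M := eps_part (def_lift a).

Lemma def_algE Y : A Y <-> def_alg A0 def_cocycle Y.
Proof.
case: (A_def) => [[_ _ addA _ _] _ _ _].
(* Y minus the lift of red Y vanishes mod eps. *)
have diffE : red Y \in A0 ->
    (A (Y - def_lift (red Y)) <-> eps_part Y - def_cocycle (red Y) \in A0).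
  move=> YA; have [_ lift_red] := def_liftP YA.
  by rewrite -eps_partB; apply: def_eps_mem; rewrite redB lift_red subrr.
split=> [YA | [YA Yf]].
- have redA := def_red YA; split=> //; apply/(diffE redA).
  by apply: def_sub => //; exact: (def_liftP redA).1.
- have [liftA _] := def_liftP YA.
  by have := addA _ _ ((diffE YA).2 Yf) liftA; rewrite subrK.
Qed.

(* The cocycle identities are the eps-parts of the closure of A under
   k-linear combinations and under products. *)
Lemma def_cocycleP : cocycle1 A0 def_cocycle.
Proof.
case: (A_def) => [[_ _ addA scaleA mulA] _ _ _]; split.
- move=> c a b aA bA; have [liftA lift_a] := def_liftP aA.
  have [liftB lift_b] := def_liftP bA.
  case/def_algE: (addA _ _ (scaleA ((c, 0) : dual k) _ liftA) liftB) => _.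
  rewrite redD eps_partD red_scale eps_part_scale lift_a lift_b /= scale0r addr0 -memvN.
  by apply: eq_memv; rewrite /def_cocycle; mx_ring.
- move=> a b aA bA; have [liftA lift_a] := def_liftP aA.
  have [liftB lift_b] := def_liftP bA.
  case/def_algE: (mulA _ _ liftA liftB) => _.
  rewrite red_mul eps_part_mul lift_a lift_b.
  by apply: eq_memv; rewrite /def_cocycle; mx_ring.
Qed.

End DeformationCocycle.

Section Gauge.
Variables (k : fieldType) (n : nat).
Local Notation M := 'M[k]_n.
Local Notation MR := 'M[dual k]_n.

Lemma inG_red (P Q : MR) : inG P Q ->
  exists c : k, [/\ c != 0, red P = c%:M & red Q = c^-1%:M].
Proof.
case=> PQ _ [c [c0 redP]]; exists c; split=> //.
have : red (P *m Q) = 1%:M by rewrite PQ red1.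
rewrite red_mul redP mul_scalar_mx => /(congr1 (fun x => c^-1 *: x)).
by rewrite scalerA mulVf // scale1r scalemx1.
Qed.

Lemma inG1 : inG (1%:M : MR) 1%:M.
Proof. by split; rewrite ?mulmx1 //; exists 1; rewrite oner_neq0 red1. Qed.

Lemma G_conj_refl (A : MR -> Prop) : G_conj A A.
Proof.
exists 1%:M, 1%:M; split=> [|Y]; first exact: inG1.
by split=> [YA | [X [XA ->]]]; [exists Y|]; rewrite mulmx1 mul1mx.
Qed.

Lemma G_conj_equiv (D : (MR -> Prop) -> Prop) : equiv_on D (@G_conj k n).
Proof.
have conj_cancel (P Q X : MR) : P *m Q = 1%:M -> P *m (Q *m X *m P) *m Q = X.
  by move=> PQ; rewrite !mulmxA PQ mul1mx -mulmxA PQ mulmx1.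
split.
- by move=> A _; apply: G_conj_refl.
- move=> A B _ _ [P [Q [PQ_G B_conj]]].
  have [c [c0 _ redQ]] := inG_red PQ_G; case: PQ_G => PQ QP _.
  exists Q, P; split; first by split=> //; exists c^-1; split; rewrite ?invr_eq0.
  move=> X; split=> [XA | [Y [/B_conj [X' [X'A ->]] ->]]]; last by rewrite conj_cancel.
  by exists (Q *m X *m P); rewrite conj_cancel //; split=> //; apply/B_conj; exists X.
- move=> A B C _ _ _ [P1 [Q1 [G1 B_conj]]] [P2 [Q2 [G2 C_conj]]].
  have [c1 [c1_0 redP1 _]] := inG_red G1; have [c2 [c2_0 redP2 _]] := inG_red G2.
  case: G1 G2 => PQ1 QP1 _ [PQ2 QP2 _].
  exists (P1 *m P2), (Q2 *m Q1); split.
    split; first by rewrite -mulmxA (mulmxA P2) PQ2 mul1mx.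
      by rewrite -mulmxA (mulmxA Q1) QP1 mul1mx.
    by exists (c1 * c2); rewrite mulf_neq0 // red_mul redP1 redP2 scalar_mxM.
  move=> Y; split.
    by case/C_conj => Z [/B_conj [X [XA ->]] ->]; exists X; rewrite !mulmxA.
  case=> X [XA ->]; apply/C_conj; exists (Q1 *m X *m P1).
  by rewrite !mulmxA; split=> //; apply/B_conj; exists X.
Qed.

Lemma inG_dual_mx (m : M) : inG (dual_mx 1%:M m) (dual_mx 1%:M (- m)).
Proof.
have inv (m' : M) : dual_mx 1%:M m' *m dual_mx 1%:M (- m') = 1%:M.
  apply: dual_mx_eq; first by rewrite red_mul !red_dual_mx red1 mulmx1.
  by rewrite eps_part_mul !red_dual_mx !eps_part_dual_mx eps_part1; mx_ring.
split; [exact: inv | by have := inv (- m); rewrite opprK |].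
by exists 1; rewrite oner_neq0 red_dual_mx.
Qed.

Lemma conj_dual_mx (m : M) (X : MR) :
  red (dual_mx 1%:M (- m) *m X *m dual_mx 1%:M m) = red X /\
  eps_part (dual_mx 1%:M (- m) *m X *m dual_mx 1%:M m) =
    eps_part X + (red X *m m - m *m red X).
Proof.
rewrite !red_mul !eps_part_mul !red_mul !red_dual_mx !eps_part_dual_mx.
by split; [rewrite mul1mx mulmx1 | mx_ring].
Qed.

End Gauge.

Section CohomologyVsConjugacy.
Variables (k : fieldType) (n : nat) (A0 : {vspace 'M[k]_n}).
Local Notation M := 'M[k]_n.

(* If f - g is the coboundary of m, then conjugation by 1 - eps m
   carries def_alg f onto def_alg g. *)
Lemma cohomologous_G_conj (f g : M -> M) :
  cohomologous A0 f g -> G_conj (def_alg A0 f) (def_alg A0 g).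
Proof.
case=> m fg; exists (dual_mx 1%:M (- m)), (dual_mx 1%:M m).
split; first by have := inG_dual_mx (- m); rewrite opprK.
have [mm' _ _] := inG_dual_mx m.
move=> Y; split=> [[YA Yg] | [X [[XA Xf] ->]]].
- exists (dual_mx 1%:M (- m) *m Y *m dual_mx 1%:M m); split.
    have [red_conj eps_conj] := conj_dual_mx m Y.
    rewrite /def_alg red_conj eps_conj; split=> //.
    by apply: eq_memv (memvB Yg (fg _ YA)); mx_ring.
  by rewrite !mulmxA mm' mul1mx -mulmxA mm' mulmx1.
- have [red_conj eps_conj] := conj_dual_mx (- m) X.
  rewrite opprK in red_conj eps_conj.
  rewrite /def_alg red_conj eps_conj; split=> //.
  by apply: eq_memv (memvD Xf (fg _ XA)); mx_ring.
Qed.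

(* Conversely, if P (with red P = c) conjugates def_alg f onto def_alg g,
   then conjugating the lifts a + eps f(a) shows that f - g is the
   coboundary of - c^-1 eps_part P. *)
Lemma G_conj_cohomologous (f g : M -> M) :
  G_conj (def_alg A0 f) (def_alg A0 g) -> cohomologous A0 f g.
Proof.
case=> P [Q [PQ_G conj_fg]].
have [c [c0 redP redQ]] := inG_red PQ_G; case: PQ_G => PQ _ _.
have epsQ : c *: eps_part Q = - (c^-1 *: eps_part P).
  have : eps_part (P *m Q) = 0 by rewrite PQ eps_part1.
  rewrite eps_part_mul redP redQ mul_scalar_mx mul_mx_scalar => /eqP.
  by rewrite addr_eq0 => /eqP.
exists (- (c^-1 *: eps_part P)) => a aA.
have [_ conjA] : def_alg A0 g (Q *m dual_mx a (f a) *m P).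
  by apply/conj_fg; exists (dual_mx a (f a)); split=> //; apply: def_alg_dual_mx.
have conj_red : red (Q *m dual_mx a (f a) *m P) = a.
  rewrite !red_mul redP redQ red_dual_mx mul_mx_scalar mul_scalar_mx.
  by rewrite scalerA mulfV // scale1r.
have conj_eps : eps_part (Q *m dual_mx a (f a) *m P) =
                c^-1 *: (a *m eps_part P) + f a + (c *: eps_part Q) *m a.
  rewrite !eps_part_mul !red_mul redP redQ red_dual_mx eps_part_dual_mx.
  rewrite !mul_mx_scalar !mul_scalar_mx scalerDr scalerA mulfV // scale1r.
  by rewrite -!scalemxAl addrA.
move: conjA; rewrite conj_red conj_eps epsQ; apply: eq_memv; mx_ring.
Qed.

End CohomologyVsConjugacy.

Lemma Def_def_alg (k : fieldType) (n d : nat) (A0 : {vspace 'M[k]_n})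
    (A : 'M[dual k]_n -> Prop) :
  DefA0 A0 d A -> exists f, cocycle1 A0 f /\ G_conj (def_alg A0 f) A.
Proof.
move=> A_def; exists (def_cocycle A); split; first exact: (def_cocycleP A_def).
suff -> : def_alg A0 (def_cocycle A) = A by apply: G_conj_refl.
apply: functional_extensionality => Y; apply: propositional_extensionality.
exact: iff_sym (def_algE A_def Y).
Qed.

Theorem proposition3p8 (k : fieldType) (n d : nat) (A0 : {vspace 'M[k]_n})
  (hA0 : is_k_subalgebra A0) (hdim : \dim A0 = d) :
  exists f : H1 A0 -> DefA0_mod_G A0 d, bijective f.
Proof.
subst d; apply: (quot_set_bij (phi := def_alg A0)).
- exact: cohomologous_equiv.
- exact: G_conj_equiv.
- by move=> f f_cocycle; exact: (def_alg_in_Def hA0 f_cocycle).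
- by move=> f g _ _; split; [exact: cohomologous_G_conj | exact: G_conj_cohomologous].
- by move=> A /Def_def_alg [f [f_cocycle fA]]; exists f.
Qed.
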